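(* Let $\mathbf P=(P,\leq,{}',0,1)$ be a bounded poset with a unary operation $'$ and let $(P,\sqcup,{}',0,1)$ be an algebra assigned to $\mathbf P$. Then $\mathbf P$ is a generalized orthomodular poset if and only if the following hold: (i) for all $x,y,z\in P$: if $(x\sqcup z)\sqcup(((x'\sqcap w)\sqcap((x\sqcup y)\sqcap w))\sqcup z)=z$ for all $w\in P$, then $(x\sqcup y)\sqcup z=z$; (ii) $(x\sqcap y)\sqcup x=x$ for all $x,y\in P$; (iii) $(x\sqcup y)\sqcup(x'\sqcup y)=1$ for all $x,y\in P$; (iv) $x''=x$ for all $x\in P$.
   Context: For a poset and $A\subseteq P$: $L(A)$ is the set of lower bounds of $A$, $U(A)$ the set of upper bounds; $L(a,b)=L(\{a,b\})$, $U(a,B)=U(\{a\}\cup B)$, etc. An orthoposet is a bounded poset $(P,\leq,{}',0,1)$ with a unary operation $'$ that is an antitone involution ($x''=x$; $x\leq y\Rightarrow y'\leq x'$) and a complementation ($L(x,x')=\{0\}$, $U(x,x')=\{1\}$). A generalized orthomodular poset is an orthoposet such that for all $x,y$, $x\leq y$ implies $U(y)=U(x,L(x',y))$. An algebra assigned to a bounded poset with unary operation $\mathbf P=(P,\leq,{}',0,1)$ is an algebra $(P,\sqcup,{}',0,1)$ of type $(2,1,0,0)$ (same $'$, $0$, $1$) such that for all $x,y\in P$: $x\sqcup y=y$ whenever $x\leq y$, and $x\sqcup y=y\sqcup x\in U(x,y)$. We write $x\sqcap y:=(x'\sqcup y')'$. *)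

Set Implicit Arguments.

Section Posets.
Variable T : Type.
Variable le : T -> T -> Prop.

Definition Lb (A : T -> Prop) : T -> Prop := fun y => forall a, A a -> le y a.
Definition Ub (A : T -> Prop) : T -> Prop := fun y => forall a, A a -> le a y.
Definition pair (a b : T) : T -> Prop := fun x => x = a \/ x = b.
Definition single (a : T) : T -> Prop := fun x => x = a.
Definition add (a : T) (B : T -> Prop) : T -> Prop := fun x => x = a \/ B x.
Definition set_eq (A B : T -> Prop) : Prop := forall x, A x <-> B x.

Definition is_poset : Prop :=
  (forall x, le x x) /\
  (forall x y, le x y -> le y x -> x = y) /\
  (forall x y z, le x y -> le y z -> le x z).

Definition bounded_poset (zero one : T) : Prop :=
  is_poset /\ (forall x, le zero x) /\ (forall x, le x one).

Definition orthoposet (c : T -> T) (zero one : T) : Prop :=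
  bounded_poset zero one /\
  (forall x, c (c x) = x) /\
  (forall x y, le x y -> le (c y) (c x)) /\
  (forall x, set_eq (Lb (pair x (c x))) (single zero)) /\
  (forall x, set_eq (Ub (pair x (c x))) (single one)).

Definition generalized_orthomodular_poset (c : T -> T) (zero one : T) : Prop :=
  orthoposet c zero one /\
  forall x y, le x y ->
    set_eq (Ub (single y)) (Ub (add x (Lb (pair (c x) y)))).

Definition assigned_algebra (join : T -> T -> T) : Prop :=
  (forall x y, le x y -> join x y = y) /\
  (forall x y, join x y = join y x) /\
  (forall x y, Ub (pair x y) (join x y)).

End Posets.

Definition meet_of (T : Type) (join : T -> T -> T) (c : T -> T) (x y : T) : T :=
  c (join (c x) (c y)).

From Stdlib Require Import Setoid.

(* The only link between
   the order and ⊔ is that x <= y iff x ⊔ y = y (x ⊔ y is an upper bound of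
   x and y, and equals y when x <= y); this turns every identity of the form
   a ⊔ b = b into the inequality a <= b and back.

   (=>) In an orthoposet ⊓ agrees with the order: x <= y gives x ⊓ y = x.
   Identities (ii)-(iv) follow at once; for (i), taking w := x yields x <= z
   and taking w := a for a lower bound a of x' and x ⊔ y yields a <= z, so
   z bounds {x} ∪ L(x', x ⊔ y) and orthomodularity gives x ⊔ y <= z.
   (<=) Identity (ii) makes x ⊓ y a lower bound of x and y; with (iv) this
   makes ' antitone, (iii) makes it a complementation, and (i) applied to
   an upper bound z of {x} ∪ L(x', y) with x <= y yields orthomodularity. *)

Definition involutive {T : Type} (c : T -> T) : Prop := forall x, c (c x) = x.
Definition antitone {T : Type} (le : T -> T -> Prop) (c : T -> T) : Prop :=
  forall x y, le x y -> le (c y) (c x).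

Definition orthomodular_law {T : Type} (le : T -> T -> Prop) (c : T -> T) : Prop :=
  forall x y, le x y ->
    set_eq (Ub le (single y)) (Ub le (add x (Lb le (pair (c x) y)))).

Section AssignedAlgebra.

Context {T : Type} {le : T -> T -> Prop} {join : T -> T -> T} {c : T -> T}.
Context {zero one : T}.

Hypothesis le_refl : forall x, le x x.
Hypothesis le_antisym : forall x y, le x y -> le y x -> x = y.
Hypothesis le_trans : forall x y z, le x y -> le y z -> le x z.
Hypothesis le_zero : forall x, le zero x.
Hypothesis le_one : forall x, le x one.

Hypothesis join_of_le : forall {x y}, le x y -> join x y = y.
Hypothesis join_comm : forall x y, join x y = join y x.
Hypothesis join_ub : forall x y, Ub le (pair x y) (join x y).

Local Notation meet := (meet_of join c).

Lemma join_upper_l (x y : T) : le x (join x y).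
Proof. apply join_ub; left; reflexivity. Qed.

Lemma join_upper_r (x y : T) : le y (join x y).
Proof. apply join_ub; right; reflexivity. Qed.

Lemma le_of_join (x y : T) : join x y = y -> le x y.
Proof. intros E; rewrite <- E; apply join_upper_l. Qed.

Lemma meet_of_le_l {x y : T} :
  involutive c -> antitone le c -> le x y -> meet x y = x.
Proof.
  intros Hinv Hac Hxy; unfold meet_of.
  rewrite join_comm, join_of_le by (apply Hac; exact Hxy); apply Hinv.
Qed.

Lemma meet_of_le_r {x y : T} :
  involutive c -> antitone le c -> le x y -> meet y x = x.
Proof.
  intros Hinv Hac Hxy; unfold meet_of.
  rewrite join_of_le by (apply Hac; exact Hxy); apply Hinv.
Qed.

Lemma meet_absorption (x y : T) :
  involutive c -> antitone le c -> join (meet x y) x = x.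
Proof.
  intros Hinv Hac; apply join_of_le; unfold meet_of.
  rewrite <- (Hinv x) at 2; apply Hac, join_upper_l.
Qed.

Lemma join_complement_top (x y : T) :
  (forall u, le x u -> le (c x) u -> u = one) ->
  join (join x y) (join (c x) y) = one.
Proof.
  intros Htop; apply Htop.
  - apply le_trans with (join x y); apply join_upper_l.
  - apply le_trans with (join (c x) y); [apply join_upper_l | apply join_upper_r].
Qed.

(* Identity (i) holds in every orthomodular orthoposet: the hypothesis
   makes z an upper bound of x and of L(x', x ⊔ y). *)
Lemma condition_i_of_orthomodular (x y z : T) :
  involutive c -> antitone le c -> orthomodular_law le c ->
  (forall w, join (join x z)
               (join (meet (meet (c x) w) (meet (join x y) w)) z) = z) ->
  join (join x y) z = z.
Proof.
  intros Hinv Hac Hom Hw.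
  assert (Hbound : forall a, le (join (meet (meet (c x) a)
                                         (meet (join x y) a)) z) z).
  { intros a; rewrite <- (Hw a) at 2; apply join_upper_r. }
  assert (Hxz : le x z).
  { apply le_trans with (join x z); [apply join_upper_l |].
    rewrite <- (Hw x) at 2; apply join_upper_l. }
  apply join_of_le, (proj2 (Hom x (join x y) (join_upper_l x y) z)); [| reflexivity].
  intros a [-> | Ha]; [exact Hxz |].
  assert (Hax : le a (c x)) by (apply Ha; left; reflexivity).
  assert (Haxy : le a (join x y)) by (apply Ha; right; reflexivity).
  specialize (Hbound a).
  rewrite (meet_of_le_r Hinv Hac Hax), (meet_of_le_r Hinv Hac Haxy),
    (meet_of_le_l Hinv Hac (le_refl a)) in Hbound.
  apply le_trans with (join a z); [apply join_upper_l | exact Hbound].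
Qed.

Lemma meet_lower_l (x y : T) :
  (forall x y, join (meet x y) x = x) -> le (meet x y) x.
Proof. intros Hii; apply le_of_join, Hii. Qed.

Lemma meet_lower_r (x y : T) :
  (forall x y, join (meet x y) x = x) -> le (meet x y) y.
Proof. intros Hii; unfold meet_of; rewrite join_comm; apply (meet_lower_l y x Hii). Qed.

(* Identities (ii) and (iv) make ' antitone: for x <= y, y' = x'' ⊓ y''
   is below x'. *)
Lemma antitone_of_absorption :
  (forall x y, join (meet x y) x = x) -> involutive c -> antitone le c.
Proof.
  intros Hii Hinv x y Hxy.
  pose proof (meet_lower_l (c x) (c y) Hii) as M; unfold meet_of in M.
  rewrite !Hinv, join_of_le in M by exact Hxy; exact M.
Qed.

Lemma top_of_complement_join (x u : T) :
  (forall x y, join (join x y) (join (c x) y) = one) ->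
  le x u -> le (c x) u -> u = one.
Proof.
  intros Hiii Hxu Hcxu.
  rewrite <- (Hiii x u), (join_of_le Hxu), (join_of_le Hcxu).
  symmetry; apply join_of_le, le_refl.
Qed.

(* Dually, 0 is the only lower bound of x and x': complementing turns such
   a lower bound l into an upper bound l' of x' and x'' = x. *)
Lemma bottom_of_complement_join (x l : T) :
  (forall x y, join (join x y) (join (c x) y) = one) ->
  involutive c -> antitone le c -> le l x -> le l (c x) -> l = zero.
Proof.
  intros Hiii Hinv Hac Hlx Hlcx.
  assert (Hc0 : c zero = one).
  { apply le_antisym; [apply le_one |].
    rewrite <- (Hinv one); apply Hac, le_zero. }
  assert (Hcl : c l = one).
  { apply (top_of_complement_join (c x)); [exact Hiii | apply Hac; exact Hlx |].
    apply Hac; exact Hlcx. }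
  rewrite <- (Hinv l), Hcl, <- Hc0; apply Hinv.
Qed.

(* Identity (i) yields orthomodularity: for x <= y and z above x and
   L(x', y), the left side of (i) collapses to z for every w, since
   (x' ⊓ w) ⊓ (y ⊓ w) belongs to L(x', y). *)
Lemma orthomodular_of_condition_i :
  (forall x y z,
     (forall w, join (join x z)
                  (join (meet (meet (c x) w) (meet (join x y) w)) z) = z) ->
     join (join x y) z = z) ->
  (forall x y, join (meet x y) x = x) ->
  orthomodular_law le c.
Proof.
  intros Hi Hii x y Hxy z; split.
  - intros Hz a [-> | Ha].
    + apply le_trans with y; [exact Hxy | apply Hz; reflexivity].
    + apply le_trans with y; [apply Ha; right; reflexivity | apply Hz; reflexivity].
  - intros Hz a ->.
    assert (Hxz : le x z) by (apply Hz; left; reflexivity).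
    apply le_of_join; rewrite <- (join_of_le Hxy); apply Hi; intros w.
    assert (Hlow : le (meet (meet (c x) w) (meet y w)) z).
    { apply Hz; right; intros b [-> | ->].
      - apply le_trans with (meet (c x) w); apply meet_lower_l; exact Hii.
      - apply le_trans with (meet y w); [apply meet_lower_r | apply meet_lower_l]; exact Hii. }
    rewrite (join_of_le Hxz), (join_of_le Hxy), (join_of_le Hlow).
    apply join_of_le, le_refl.
Qed.

End AssignedAlgebra.

Theorem theorem2 (T : Type) (le : T -> T -> Prop) (c : T -> T) (zero one : T)
    (join : T -> T -> T) :
  bounded_poset le zero one ->
  assigned_algebra le join ->
  let meet := meet_of join c in
  generalized_orthomodular_poset le c zero one <->
  ((forall x y z : T,
      (forall w : T,
         join (join x z)
              (join (meet (meet (c x) w) (meet (join x y) w)) z) = z) ->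
      join (join x y) z = z) /\
   (forall x y : T, join (meet x y) x = x) /\
   (forall x y : T, join (join x y) (join (c x) y) = one) /\
   (forall x : T, c (c x) = x)).
Proof.
  intros [[Hrefl [Hanti Htrans]] [Hzero Hone]] [Hj [Hcomm Hub]] meet; split.
  - intros [[_ [Hinv [Hac [_ HU]]]] Hom].
    assert (Htop : forall x u, le x u -> le (c x) u -> u = one).
    { intros x u Hxu Hcxu; apply (HU x); intros a [-> | ->]; assumption. }
    repeat split.
    + intros x y z.
      exact (condition_i_of_orthomodular Hrefl Htrans Hj Hcomm Hub x y z Hinv Hac Hom).
    + intros x y; exact (meet_absorption Hj Hub x y Hinv Hac).
    + intros x y; exact (join_complement_top Htrans Hub x y (Htop x)).
    + exact Hinv.
  - intros [Hi [Hii [Hiii Hinv]]].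
    assert (Hac : antitone le c) by exact (antitone_of_absorption Hj Hub Hii Hinv).
    split; [| exact (orthomodular_of_condition_i Hrefl Htrans Hj Hcomm Hub Hi Hii)].
    refine (conj (conj (conj Hrefl (conj Hanti Htrans)) (conj Hzero Hone))
                 (conj Hinv (conj Hac (conj _ _)))).
    + intros x l; split.
      * intros Hl; apply (bottom_of_complement_join Hrefl Hanti Hzero Hone Hj x l Hiii Hinv Hac);
          apply Hl; [left | right]; reflexivity.
      * intros -> a _; apply Hzero.
    + intros x u; split.
      * intros Hu; apply (top_of_complement_join Hrefl Hj x u Hiii);
          apply Hu; [left | right]; reflexivity.
      * intros -> a _; apply Hone.
Qed.
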